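(* Let $n\ge2$ and $|\psi\rangle_{ABS}\in\mathbb{C}^2\otimes\mathbb{C}^2\otimes\mathbb{C}^n$. For orthonormal bases $\{|i\rangle_A\}_{i=0,1}$, $\{|j\rangle_B\}_{j=0,1}$, $\{|l\rangle_S\}_{l=1,\dots,n}$, write $a^l_{ij}={}_A\langle i|{}_B\langle j|{}_S\langle l|\psi\rangle_{ABS}$ and let $A^l$ be the $2\times2$ matrix with entries $(A^l)_{ij}=a^l_{ij}$. Then there exist orthonormal bases of Alice's, Bob's and Sapna's spaces such that the matrices $A^{l\dagger}A^l$ are diagonal for all $l$; similarly, there exist (possibly different) orthonormal bases such that the matrices $A^lA^{l\dagger}$ are diagonal for all $l$. *)

From HB Require Import structures.
From mathcomp Require Import all_boot all_order all_algebra.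
From mathcomp Require Import complex.
From mathcomp Require Import reals.
From mathcomp Require Export spectral.
Set Implicit Arguments. Unset Strict Implicit. Unset Printing Implicit Defensive.
Import Order.TTheory GRing.Theory Num.Theory.
Local Open Scope ring_scope.
Local Open Scope complex_scope.

(* A tripartite state |psi>_{ABS} in C^2 (x) C^2 (x) C^n is given by its
   coefficients psi i j l = <i|<j|<l|psi> in the standard (computational) bases. *)

(* An orthonormal basis of C^m is given by a unitary matrix U : 'M_m
   (U *m U^t* = 1): the k-th basis vector is |k'> = sum_x U k x |x>,
   i.e. row k of U. *)

(* Coefficient matrix A^l in the new bases (U for Alice, V for Bob, W for Sapna):
   (A^l)_{ij} = <i'|<j'|<l'|psi> = sum_{x,y,z} conj(U i x) conj(V j y) conj(W l z) psi x y z. *)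
Definition coef_mx (R : realType) (n : nat)
  (psi : 'I_2 -> 'I_2 -> 'I_n -> R[i])
  (U V : 'M[R[i]]_2) (W : 'M[R[i]]_n) (l : 'I_n) : 'M[R[i]]_2 :=
  \matrix_(i < 2, j < 2)
    \sum_(x < 2) \sum_(y < 2) \sum_(z < n)
      (U i x)^* * (V j y)^* * (W l z)^* * psi x y z.

(* Keep Alice's basis and take for Bob an eigenbasis of his reduced operator
   rho_B = \sum_x P_x P_x^*, where (P_x)_(y,z) = psi x y z.  Then the off-diagonal
   entry of A^l^* A^l is the l-th diagonal entry of W M W^* for a single n x n
   matrix M, whose trace is an off-diagonal entry of rho_B in its eigenbasis, i.e. 0.
   So it suffices that every traceless M is unitarily similar to a matrix with zero
   diagonal: write M = H1 + i H2 with H1, H2 Hermitian and traceless, and zero the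
   diagonal of H1, then that of H2 while keeping the one of H1.  While H2 has a
   nonzero diagonal entry it also has one of the opposite sign, and a unitary acting
   on the plane of the two basis vectors zeroes the first one without spoiling the
   diagonal of H1.  Exchanging Alice and Bob transposes every A^l, which turns the
   first claim into the second. *)
From HB Require Import structures.
From mathcomp Require Import all_boot all_order all_algebra.
From mathcomp Require Import complex reals spectral.
From mathcomp Require Import ring.
Import Order.TTheory GRing.Theory Num.Theory.
Local Open Scope ring_scope.
Local Open Scope sesquilinear_scope.

Section ZeroDiagonal.
Set Implicit Arguments. Unset Strict Implicit. Unset Printing Implicit Defensive.
Variable C : numClosedFieldType.

Lemma sum_ord2 (V : nmodType) (F : 'I_2 -> V) : \sum_(a < 2) F a = F 0 + F 1.
Proof. by rewrite big_ord_recl big_ord1; congr (F _ + F _); apply: val_inj. Qed.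

Lemma trmxC_mxE m n (M : 'M[C]_(m, n)) i j : M^t* i j = (M j i)^*.
Proof. by rewrite !mxE. Qed.

Lemma mulmx_trC_mxE m n p (A : 'M[C]_(m, n)) (M : 'M[C]_n) (B : 'M[C]_(p, n)) i j :
  (A *m M *m B^t*) i j = \sum_a \sum_b A i a * M a b * (B j b)^*.
Proof.
rewrite !mxE; under eq_bigr => b _ do rewrite !mxE mulr_suml.
exact: exchange_big.
Qed.

Lemma mulmx_trC_row m n p (A : 'M[C]_(m, n)) (M : 'M[C]_n) (B : 'M[C]_(p, n)) i j :
  (A *m M *m B^t*) i j = (row i A *m M *m (row j B)^t*) 0 0.
Proof.
rewrite !mulmx_trC_mxE; apply: eq_bigr => a _; apply: eq_bigr => b _.
by rewrite !mxE.
Qed.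

Lemma trmxC_sandwich m n p (A : 'M[C]_(m, n)) (M : 'M[C]_n) (B : 'M[C]_(p, n)) :
  (A *m M *m B^t*)^t* = B *m M^t* *m A^t*.
Proof. by rewrite !trmx_mul !map_mxM trmxCK mulmxA. Qed.

Lemma sandwichM m n p (A : 'M[C]_(m, n)) (B : 'M[C]_(n, p)) (M : 'M[C]_p) :
  A *m B *m M *m (A *m B)^t* = A *m (B *m M *m B^t*) *m A^t*.
Proof. by rewrite trmx_mul map_mxM !mulmxA. Qed.

Lemma hermitian_mxE n (M : 'M[C]_n) i j : M^t* = M -> M j i = (M i j)^*.
Proof. by move=> Mh; rewrite -{1}Mh !mxE. Qed.

Lemma hermitian_diag_real n (M : 'M[C]_n) i : M^t* = M -> M i i \is Num.real.
Proof. by move=> Mh; apply/CrealP; rewrite -hermitian_mxE. Qed.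

Lemma hermitian2_diag (X : 'M[C]_2) : X^t* = X -> X 0 1 = 0 -> is_diag_mx X.
Proof.
move=> Xh X01; apply/is_diag_mxP => a b.
case: a => [[|[|//]] ?]; case: b => [[|[|//]] ?] //= _.
- by rewrite -X01; congr (X _ _); apply: val_inj.
- by rewrite (hermitian_mxE _ _ Xh) -[in RHS]conjC0 -X01; congr (X _ _)^*; apply: val_inj.
Qed.

Lemma unitarymx1 n : (1%:M : 'M[C]_n) \is unitarymx.
Proof. by apply/unitarymxP; rewrite trmx1 map_mx1 mulmx1. Qed.

Lemma mxtrace_trC n (M : 'M[C]_n) : \tr (M^t*) = (\tr M)^*.
Proof. by rewrite trace_map_mx mxtrace_tr. Qed.

Lemma mxtrace_unitary_sandwich n (P M : 'M[C]_n) :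
  P \is unitarymx -> \tr (P *m M *m P^t*) = \tr M.
Proof.
rewrite mxtrace_mulC mulmxA -trmxC_unitary => /unitarymxP.
by rewrite trmxCK => ->; rewrite mul1mx.
Qed.

Lemma hermitian_spectral_offdiag n (A : 'M[C]_n) i j : A^t* = A -> i != j ->
  (spectralmx A *m A *m (spectralmx A)^t*) i j = 0.
Proof.
move=> Ah ij; pose Q := spectralmx A.
have Q_unitary : Q \is unitarymx := spectral_unitarymx A.
have /orthomx_spectralP A_spectral : A \is normalmx by apply/normalmxP; rewrite Ah.
rewrite -/Q [in Q *m A]A_spectral invmx_unitary // !mulmxA (unitarymxP Q_unitary).
by rewrite mul1mx -mulmxA (unitarymxP Q_unitary) mulmx1 mxE (negbTE ij) mulr0n.
Qed.

Lemma exists_phase_Re0 (h : C) : exists2 e : C, e * e^* = 1 & e^* * h + e * h^* = 0.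
Proof.
have [->|h0] := eqVneq h 0; first by exists 1; rewrite ?conjC1 ?conjC0 ?mulr0 ?addr0 ?mulr1.
have nh0 : `|h| != 0 by rewrite normr_eq0.
exists ('i * h / `|h|); rewrite !rmorphM fmorphV /= conj_normC conjCi.
  transitivity (- 'i ^+ 2 * (h * h^*) / `|h| ^+ 2); first by field.
  by rewrite sqrCi -normCK opprK mul1r divff // expf_neq0.
by field.
Qed.

Lemma exists_real_root_quadratic (a b c : C) :
  a \is Num.real -> b \is Num.real -> a * c < 0 ->
  exists2 x : C, x \is Num.real & a * x ^+ 2 + b * x + c = 0.
Proof.
move=> aR bR ac_lt0.
have a0 : a != 0 by apply: contraTneq ac_lt0 => ->; rewrite mul0r ltxx.
have disc_ge0 : 0 <= b ^+ 2 - 4 * (a * c).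
  by rewrite -mulrN addr_ge0 ?real_exprn_even_ge0 // mulr_ge0 // oppr_ge0 ltW.
exists ((sqrtC (b ^+ 2 - 4 * (a * c)) - b) / (2 * a)).
  by rewrite rpredM ?rpredV ?rpredB ?rpredM ?realn ?sqrtC_real.
have sq := sqrtCK (b ^+ 2 - 4 * (a * c)).
set r := sqrtC _ in sq *.
transitivity ((r ^+ 2 - (b ^+ 2 - 4 * (a * c))) / (4 * a)); first by field.
by rewrite sq subrr mul0r.
Qed.

Lemma exists_opposite_sign n (d : 'I_n -> C) j :
  (forall l, d l \is Num.real) -> \sum_l d l = 0 -> d j != 0 ->
  exists k, d j * d k < 0.
Proof.
move=> dR sum0 dj0; apply/existsP; apply: contraNT dj0.
rewrite negb_exists => /forallP dj_ge0.
have {}dj_ge0 l : true -> 0 <= d j * d l.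
  by move=> _; have := dj_ge0 l; rewrite real_ltNge ?rpredM // ?real0 negbK.
have := psumr_eq0P dj_ge0; rewrite -mulr_sumr sum0 mulr0 => /(_ erefl j isT) /eqP.
by rewrite mulf_eq0 orbb.
Qed.

Lemma unitary2_zero_diag (K1 K2 : 'M[C]_2) :
    K1^t* = K1 -> K2^t* = K2 -> K1 0 0 = 0 -> K1 1 1 = 0 -> K2 0 0 * K2 1 1 < 0 ->
  exists2 G : 'M[C]_2, G \is unitarymx &
    [/\ (G *m K1 *m G^t*) 0 0 = 0, (G *m K1 *m G^t*) 1 1 = 0
      & (G *m K2 *m G^t*) 0 0 = 0].
Proof.
move=> K1h K2h K1_00 K1_11 K2_lt0.
have [e ee e_Re0] := exists_phase_Re0 (K1 0 1).
set rho := e^* * K2 0 1 + e * (K2 0 1)^*.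
have rhoR : rho \is Num.real.
  by apply/CrealP; rewrite /rho rmorphD !rmorphM /= !conjCK addrC.
have [c cR c_root] :=
  exists_real_root_quadratic (hermitian_diag_real 0 K2h) rhoR K2_lt0.
have N_gt0 : 0 < sqrtC (c ^+ 2 + 1).
  by rewrite sqrtC_gt0 ltr_wpDl ?real_exprn_even_ge0.
set N := sqrtC _ in N_gt0.
have N0 : N != 0 by rewrite gt_eqF.
have Nc : N^* = N by rewrite conj_Creal ?gtr0_real.
have NN : N ^+ 2 = c ^+ 2 + 1 by rewrite sqrtCK.
have cc : c^* = c by rewrite conj_Creal.
(* The phase [e] makes the off-diagonal entry of [K1] purely imaginary, so that the
   real rotation by [c] keeps the diagonal of [K1] zero; [c] is chosen to zero the
   first diagonal entry of [K2]. *)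
pose G := \matrix_(p < 2, q < 2)
  ((if p == 0 then if q == 0 then c else e else if q == 0 then - e^* else c) / N).
have G_sandwich K p : K^t* = K -> (G *m K *m G^t*) p p =
    G p 0 * (G p 0)^* * K 0 0 + G p 1 * (G p 1)^* * K 1 1
    + (G p 0 * (G p 1)^* * K 0 1 + G p 1 * (G p 0)^* * (K 0 1)^*).
  by move=> Kh; rewrite mulmx_trC_mxE !sum_ord2 (hermitian_mxE 0 1 Kh); ring.
have G_row_norm : c / N * (c / N) + e / N * (e^* / N) = 1.
  transitivity ((c ^+ 2 + e * e^*) / N ^+ 2); first by field.
  by rewrite ee -NN divff ?expf_neq0.
exists G.
- apply/unitarymxP/matrixP => p q; rewrite !mxE !sum_ord2 !mxE.
  case: p => [[|[|//]] ?]; case: q => [[|[|//]] ?] /=;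
    rewrite ?(rmorphM, rmorphN, fmorphV) /= ?conjCK cc Nc.
  + exact: G_row_norm.
  + by field.
  + by field.
  + by rewrite -G_row_norm; field.
- split; rewrite G_sandwich // !mxE /= ?(rmorphM, rmorphN, fmorphV) /= ?conjCK cc Nc.
  + rewrite K1_00 K1_11.
    transitivity (c / N ^+ 2 * (e^* * K1 0 1 + e * (K1 0 1)^*)); first by field.
    by rewrite e_Re0 mulr0.
  + rewrite K1_00 K1_11.
    transitivity (- c / N ^+ 2 * (e^* * K1 0 1 + e * (K1 0 1)^*)); first by field.
    by rewrite e_Re0 mulr0.
  + transitivity ((K2 0 0 * c ^+ 2 + rho * c + e * e^* * K2 1 1) / N ^+ 2).
      by rewrite /rho; field.
    by rewrite ee mul1r c_root mul0r.
Qed.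

Section PairEmbedding.
Variables (n : nat) (j k : 'I_n).
Hypothesis neq_jk : j != k.

Definition pair_sel (a : 'I_2) : 'I_n := if a == 0 then j else k.

Definition pair_mx : 'M[C]_(2, n) := \matrix_(a, l) (l == pair_sel a)%:R.

Definition pair_embed (G : 'M[C]_2) : 'M[C]_n :=
  1%:M + pair_mx^t* *m (G - 1%:M) *m pair_mx.

Lemma pair_sel_inj : injective pair_sel.
Proof.
move=> a b; case: a => [[|[|//]] ?]; case: b => [[|[|//]] ?];
  rewrite /pair_sel /= => E; apply: val_inj => //=; by move: neq_jk; rewrite E eqxx.
Qed.

Lemma pair_mxM p (M : 'M[C]_(n, p)) a q : (pair_mx *m M) a q = M (pair_sel a) q.
Proof.
rewrite mxE (bigD1 (pair_sel a)) //= mxE eqxx mul1r big1 ?addr0 // => l /negbTE l_a.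
by rewrite mxE l_a mul0r.
Qed.

Lemma pair_mx_sandwichE (M : 'M[C]_n) a b :
  (pair_mx *m M *m pair_mx^t*) a b = M (pair_sel a) (pair_sel b).
Proof.
rewrite -mulmxA pair_mxM.
have -> : M *m pair_mx^t* = (pair_mx *m M^t*)^t* by rewrite trmx_mul map_mxM trmxCK.
by rewrite trmxC_mxE pair_mxM trmxC_mxE conjCK.
Qed.

Lemma pair_mx_unitary : pair_mx \is unitarymx.
Proof.
apply/unitarymxP/matrixP => a b; have := pair_mx_sandwichE 1%:M a b.
by rewrite mulmx1 => ->; rewrite !mxE (inj_eq pair_sel_inj).
Qed.

Lemma pair_embed_unitary G : G \is unitarymx -> pair_embed G \is unitarymx.
Proof.
move=> /unitarymxP GG; apply/unitarymxP; set S := pair_mx; set X := G - 1%:M.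
have SS : S *m S^t* = 1%:M by apply/unitarymxP/pair_mx_unitary.
have X_sum : X + X^t* + X *m X^t* = 0.
  rewrite /X linearB /= map_mxB trmx1 map_mx1 mulmxBl !mulmxBr GG !mulmx1 mul1mx.
  by rewrite -[1%:M - G]opprB -opprD subrr.
have embed_trC : (1%:M + S^t* *m X *m S)^t* = 1%:M + S^t* *m X^t* *m S.
  by rewrite [_^T]linearD /= map_mxD trmx1 map_mx1 !trmx_mul !map_mxM trmxCK mulmxA.
rewrite /pair_embed -/S -/X embed_trC; clearbody X.
rewrite mulmxDl !mulmxDr mul1mx mulmx1 !mulmxA -[_ *m S *m S^t*]mulmxA SS mulmx1.
rewrite mul1mx -addrA -[RHS]addr0; congr (_ + _).
rewrite -!mulmxDl -[S^t* *m X *m X^t*]mulmxA -!mulmxDr addrA [X^t* + X]addrC X_sum.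
by rewrite mulmx0 mul0mx.
Qed.

Lemma pair_mx_embed G : pair_mx *m pair_embed G = G *m pair_mx.
Proof.
have SS : pair_mx *m pair_mx^t* = 1%:M by apply/unitarymxP/pair_mx_unitary.
by rewrite mulmxDr mulmx1 !mulmxA SS mul1mx -{1}[pair_mx]mul1mx -mulmxDl addrC subrK.
Qed.

Lemma row_pair_embed G l : l != j -> l != k -> row l (pair_embed G) = row l 1%:M.
Proof.
move=> lj lk; have S_l : row l (pair_mx^t*) = 0.
  apply/rowP => a; rewrite !mxE.
  have /negbTE -> : l != pair_sel a by rewrite /pair_sel; case: ifP.
  by rewrite conjC0.
by rewrite /pair_embed [row l _]linearD /= !row_mul S_l !mul0mx addr0.
Qed.

Lemma pair_embed_sandwich_sel G M a b :
  (pair_embed G *m M *m (pair_embed G)^t*) (pair_sel a) (pair_sel b) =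
  (G *m (pair_mx *m M *m pair_mx^t*) *m G^t*) a b.
Proof.
rewrite -pair_mx_sandwichE !mulmxA -mulmxA -map_mxM -trmx_mul !pair_mx_embed.
by rewrite trmx_mul map_mxM !mulmxA.
Qed.

Lemma pair_embed_sandwich_out G M l : l != j -> l != k ->
  (pair_embed G *m M *m (pair_embed G)^t*) l l = M l l.
Proof.
move=> lj lk; rewrite mulmx_trC_row row_pair_embed // -mulmx_trC_row.
by rewrite mul1mx trmx1 map_mx1 mulmx1.
Qed.

End PairEmbedding.

Lemma zero_diag_step n (M1 M2 : 'M[C]_n) j k :
    M1^t* = M1 -> M2^t* = M2 -> (forall l, M1 l l = 0) -> M2 j j * M2 k k < 0 ->
  exists2 P : 'M[C]_n, P \is unitarymx &
    [/\ forall l, (P *m M1 *m P^t*) l l = 0, (P *m M2 *m P^t*) j j = 0 &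
        forall l, l != j -> l != k -> (P *m M2 *m P^t*) l l = M2 l l].
Proof.
move=> M1h M2h M1_0 M2_lt0.
have jk : j != k.
  apply: contraTneq M2_lt0 => <-.
  by rewrite -[X in _ * X](conj_Creal (hermitian_diag_real j M2h)) le_gtF // mul_conjC_ge0.
pose K M := pair_mx j k *m M *m (pair_mx j k)^t*.
have Kh M : M^t* = M -> (K M)^t* = K M by move=> Mh; rewrite trmxC_sandwich Mh.
have := unitary2_zero_diag (Kh _ M1h) (Kh _ M2h); rewrite !pair_mx_sandwichE /=.
case/(_ (M1_0 j) (M1_0 k) M2_lt0) => G G_unitary [G1_00 G1_11 G2_00].
pose P := pair_embed j k G.
have P_j M : (P *m M *m P^t*) j j = (G *m K M *m G^t*) 0 0.
  exact: (pair_embed_sandwich_sel jk G M 0 0).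
have P_k M : (P *m M *m P^t*) k k = (G *m K M *m G^t*) 1 1.
  exact: (pair_embed_sandwich_sel jk G M 1 1).
exists P; first exact: pair_embed_unitary.
split=> [l||]; last exact: pair_embed_sandwich_out.
- have [->|lj] := eqVneq l j; first by rewrite P_j.
  have [->|lk] := eqVneq l k; first by rewrite P_k.
  by rewrite pair_embed_sandwich_out.
- by rewrite P_j.
Qed.

Lemma hermitian_zero_diag n (M1 M2 : 'M[C]_n) :
    M1^t* = M1 -> M2^t* = M2 -> (forall l, M1 l l = 0) -> \tr M2 = 0 ->
  exists2 P : 'M[C]_n, P \is unitarymx &
    forall l, (P *m M1 *m P^t*) l l = 0 /\ (P *m M2 *m P^t*) l l = 0.
Proof.
have [m] := ubnP #|[set l | M2 l l != 0]|; elim: m M1 M2 => // m IH M1 M2.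
move=> supp_lt M1h M2h M1_0 tr0.
case: (pickP [pred l | M2 l l != 0]) => [j /= M2_j | M2_0]; last first.
  exists 1%:M; first exact: unitarymx1.
  move=> l; rewrite !mul1mx trmx1 map_mx1 !mulmx1 M1_0.
  by split=> //; apply/eqP/negbFE/M2_0.
have [k M2_lt0] := exists_opposite_sign (fun l => hermitian_diag_real l M2h) tr0 M2_j.
have [P1 P1_unitary [P1M1_0 P1M2_j P1M2_out]] := zero_diag_step M1h M2h M1_0 M2_lt0.
have [|||||P2 P2_unitary P2_0] := IH (P1 *m M1 *m P1^t*) (P1 *m M2 *m P1^t*).
- rewrite -ltnS; apply: leq_trans supp_lt.
  rewrite ltnS [X in (_ < X)%N](cardsD1 j) inE M2_j add1n ltnS.
  apply/subset_leq_card/subsetP => l; rewrite !inE.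
  have [->|lj] := eqVneq l j; first by rewrite P1M2_j eqxx.
  have [->|lk] := eqVneq l k.
    by move=> _; apply: contraTneq M2_lt0 => ->; rewrite mulr0 ltxx.
  by rewrite P1M2_out.
- by rewrite trmxC_sandwich M1h.
- by rewrite trmxC_sandwich M2h.
- exact: P1M1_0.
- by rewrite mxtrace_unitary_sandwich.
exists (P2 *m P1); first exact: mul_unitarymx.
by move=> l; rewrite !sandwichM; exact: P2_0.
Qed.

Lemma traceless_unitary_zero_diag n (M : 'M[C]_n) : \tr M = 0 ->
  exists2 P : 'M[C]_n, P \is unitarymx & forall l, (P *m M *m P^t*) l l = 0.
Proof.
move=> tr0; have i0 : ('i : C) != 0 by apply: neq0Ci.
have two0 : (2 : C) != 0 by rewrite pnatr_eq0.
pose H1 := 2^-1 *: (M + M^t*); pose H2 := (2 * 'i)^-1 *: (M - M^t*).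
have H1h : H1^t* = H1.
  rewrite /H1 linearZ /= map_mxZ linearD /= map_mxD trmxCK.
  by rewrite fmorphV /= conjC_nat addrC.
have H2h : H2^t* = H2.
  rewrite /H2 linearZ /= map_mxZ linearB /= map_mxB trmxCK fmorphV rmorphM /=.
  by rewrite conjC_nat conjCi; apply/matrixP => p q; rewrite !mxE; field.
have trH1 : \tr H1 = 0 by rewrite mxtraceZ mxtraceD mxtrace_trC tr0 conjC0 addr0 mulr0.
have trH2 : \tr H2 = 0 by rewrite mxtraceZ linearB /= mxtrace_trC tr0 conjC0 subr0 mulr0.
have ME : M = H1 + 'i *: H2 by apply/matrixP => p q; rewrite !mxE; field.
clearbody H1 H2.
have zero_h : (0 : 'M[C]_n)^t* = 0 by rewrite trmx0 map_mx0.
have zero_0 l : (0 : 'M[C]_n) l l = 0 by rewrite mxE.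
have [P1 P1_unitary /all_and2 [_ P1H1_0]] := hermitian_zero_diag zero_h H1h zero_0 trH1.
have [|||P2 P2_unitary /all_and2 [P2H1_0 P2H2_0]] :=
  hermitian_zero_diag (M2 := P1 *m H2 *m P1^t*) _ _ P1H1_0.
- by rewrite trmxC_sandwich H1h.
- by rewrite trmxC_sandwich H2h.
- by rewrite mxtrace_unitary_sandwich.
exists (P2 *m P1); first exact: mul_unitarymx.
move=> l; rewrite ME mulmxDr -scalemxAr mulmxDl -scalemxAl !sandwichM.
by rewrite mxE [X in _ + X]mxE P2H1_0 P2H2_0 mulr0 addr0.
Qed.

End ZeroDiagonal.

Section TripartiteState.
Variables (R : realType) (n : nat) (psi : 'I_2 -> 'I_2 -> 'I_n -> R[i]).

Definition alice_slice (x : 'I_2) : 'M[R[i]]_(2, n) := \matrix_(y, z) psi x y z.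

Definition bob_density : 'M[R[i]]_2 := \sum_x alice_slice x *m (alice_slice x)^t*.

Definition cross_mx (Q : 'M[R[i]]_2) : 'M[R[i]]_n :=
  \sum_x (row 0 (Q *m alice_slice x))^t* *m row 1 (Q *m alice_slice x).

Lemma coef_mx1E (Q : 'M[R[i]]_2) W l x j :
  coef_mx psi 1%:M (map_mx Num.conj Q) W l x j = (Q *m alice_slice x *m W^t*) j l.
Proof.
rewrite mxE (bigD1 x) //= [X in _ + X]big1 => [|x' x'x]; last first.
  apply: big1 => y _; apply: big1 => z _.
  by rewrite !mxE eq_sym (negbTE x'x) conjC0 !mul0r.
rewrite addr0 exchange_big /= [RHS]mxE; apply: eq_bigr => z _.
rewrite [(Q *m _) j z]mxE mulr_suml; apply: eq_bigr => y _.
by rewrite !mxE eqxx conjC1 mul1r conjCK; ring.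
Qed.

Lemma coef_mx1_gram_offdiag (Q : 'M[R[i]]_2) W l :
  let A := coef_mx psi 1%:M (map_mx Num.conj Q) W l in
  (A^t* *m A) 0 1 = (W *m cross_mx Q *m W^t*) l l.
Proof.
rewrite /= /cross_mx mulmx_sumr mulmx_suml summxE mxE; apply: eq_bigr => x _.
rewrite !mulmxA -mulmxA [RHS]mxE big_ord1 mxE !coef_mx1E.
have -> : W *m (row 0 (Q *m alice_slice x))^t* = (row 0 (Q *m alice_slice x) *m W^t*)^t*.
  by rewrite trmx_mul map_mxM trmxCK.
by rewrite [_^T _ _]mxE coef_mx1E -!row_mul !mxE.
Qed.

Lemma mxtrace_cross_mx (Q : 'M[R[i]]_2) :
  \tr (cross_mx Q) = (Q *m bob_density *m Q^t*) 1 0.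
Proof.
rewrite /cross_mx /bob_density linear_sum /= mulmx_sumr mulmx_suml summxE.
apply: eq_bigr => x _; rewrite mxtrace_mulC trace_mx11.
have -> : Q *m (alice_slice x *m (alice_slice x)^t*) *m Q^t* =
          Q *m alice_slice x *m (Q *m alice_slice x)^t*.
  by rewrite trmx_mul map_mxM !mulmxA.
by rewrite !mxE; apply: eq_bigr => z _; rewrite !mxE.
Qed.

Lemma bob_density_hermitian : bob_density^t* = bob_density.
Proof.
rewrite /bob_density linear_sum /= raddf_sum; apply: eq_bigr => x _.
by rewrite /= trmx_mul map_mxM trmxCK.
Qed.

Lemma exists_bases_coef_cols_orthogonal :
  exists (U V : 'M[R[i]]_2) (W : 'M[R[i]]_n),
    [/\ U \is unitarymx, V \is unitarymx, W \is unitarymx &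
        forall l, is_diag_mx ((coef_mx psi U V W l)^t* *m coef_mx psi U V W l)].
Proof.
pose Q := spectralmx bob_density.
have trace0 : \tr (cross_mx Q) = 0.
  by rewrite mxtrace_cross_mx hermitian_spectral_offdiag // bob_density_hermitian.
have [W W_unitary W_0] := traceless_unitary_zero_diag trace0.
exists 1%:M, (map_mx Num.conj Q), W; split.
- exact: unitarymx1.
- by rewrite conjC_unitary spectral_unitarymx.
- exact: W_unitary.
move=> l; apply: hermitian2_diag; first by rewrite trmx_mul map_mxM trmxCK.
by rewrite coef_mx1_gram_offdiag W_0.
Qed.

End TripartiteState.

Lemma coef_mx_swap (R : realType) n (psi : 'I_2 -> 'I_2 -> 'I_n -> R[i]) U V W l :
  coef_mx (fun x y z => psi y x z) V U W l = (coef_mx psi U V W l)^T.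
Proof.
apply/matrixP => a b; rewrite [RHS]mxE !mxE exchange_big; apply: eq_bigr => x _.
apply: eq_bigr => y _; apply: eq_bigr => z _; rewrite mulrAC.
by rewrite [(V a y)^* * _]mulrC -!mulrA; congr (_ * (_ * _)); exact: mulrC.
Qed.

Lemma exists_bases_coef_rows_orthogonal (R : realType) n
    (psi : 'I_2 -> 'I_2 -> 'I_n -> R[i]) :
  exists (U V : 'M[R[i]]_2) (W : 'M[R[i]]_n),
    [/\ U \is unitarymx, V \is unitarymx, W \is unitarymx &
        forall l, is_diag_mx (coef_mx psi U V W l *m (coef_mx psi U V W l)^t*)].
Proof.
have [V [U [W [V_unitary U_unitary W_unitary diag]]]] :=
  exists_bases_coef_cols_orthogonal (fun x y z => psi y x z).
exists U, V, W; split; [exact: U_unitary | exact: V_unitary | exact: W_unitary | move=> l].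
have := diag l; rewrite coef_mx_swap -is_diag_trmx.
by rewrite trmx_mul -map_trmx !trmxK.
Qed.

Local Open Scope complex_scope.

Theorem lemma5 (R : realType) (n : nat) (hn : (2 <= n)%N)
  (psi : 'I_2 -> 'I_2 -> 'I_n -> R[i]) :
  (exists (U V : 'M[R[i]]_2) (W : 'M[R[i]]_n),
     [/\ U \is unitarymx, V \is unitarymx, W \is unitarymx &
         forall l : 'I_n,
           is_diag_mx ((coef_mx psi U V W l)^t* *m coef_mx psi U V W l)]) /\
  (exists (U V : 'M[R[i]]_2) (W : 'M[R[i]]_n),
     [/\ U \is unitarymx, V \is unitarymx, W \is unitarymx &
         forall l : 'I_n,
           is_diag_mx (coef_mx psi U V W l *m (coef_mx psi U V W l)^t*)]).
Proof.
split; [exact: exists_bases_coef_cols_orthogonal | exact: exists_bases_coef_rows_orthogonal].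
Qed.
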